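(* Let $M_1$ and $M_2$ be uniformly dense matroids on the same finite ground set $E$. Then their intersection $M_1\wedge M_2$ is a uniformly dense matroid on $E$.
   Context: For a matroid $M=(E,\mathcal{B})$, the dual is $M^\star=(E,\{E\setminus B: B\in\mathcal{B}\})$. The union of matroids $M_1=(E,\mathcal{B}_1)$, $M_2=(E,\mathcal{B}_2)$ is the matroid on $E$ whose bases are the inclusion-maximal sets among $\{B_1\cup B_2: B_1\in\mathcal{B}_1,B_2\in\mathcal{B}_2\}$. The intersection is $M_1\wedge M_2=(M_1^\star\vee M_2^\star)^\star$. With $\operatorname{rank}(A)=\max_B|A\cap B|$ and $\rho(A)=|A|/\operatorname{rank}(A)$, a matroid is uniformly dense if $\rho(A)\le\rho(E)$ for all nonempty $A\subseteq E$ (matroids assumed loopless). *)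

From mathcomp Require Import all_boot.
Set Implicit Arguments. Unset Strict Implicit. Unset Printing Implicit Defensive.

(* A matroid on a finite ground set E (a finType) is given by its family of
   bases, a {set {set E}}. *)
Section Matroids.
Variable E : finType.

Definition is_matroid (B : {set {set E}}) : Prop :=
  B != set0 /\
  forall B1 B2, B1 \in B -> B2 \in B ->
    forall x, x \in B1 :\: B2 ->
      exists2 y, y \in B2 :\: B1 & (y |: (B1 :\ x)) \in B.

Definition mdual (B : {set {set E}}) : {set {set E}} :=
  [set ~: X | X in B].

Definition munion (B1 B2 : {set {set E}}) : {set {set E}} :=
  let U := [set X :|: Y | X in B1, Y in B2] in
  [set X in U | [forall Y in U, (X \subset Y) ==> (Y == X)]].

Definition mmeet (B1 B2 : {set {set E}}) : {set {set E}} :=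
  mdual (munion (mdual B1) (mdual B2)).

Definition mrank (B : {set {set E}}) (A : {set E}) : nat :=
  \max_(X in B) #|A :&: X|.

Definition loopless (B : {set {set E}}) : Prop :=
  forall e : E, exists2 X, X \in B & e \in X.

(* rho(A) <= rho(E) for all nonempty A, i.e. |A|/rank(A) <= |E|/rank(E),
   stated cross-multiplied. *)
Definition uniformly_dense (B : {set {set E}}) : Prop :=
  forall A : {set E}, A != set0 ->
    #|A| * mrank B [set: E] <= #|E| * mrank B A.

End Matroids.

(* Since M1 /\ M2 = (M1^* \/ M2^* )^*, it suffices that uniform density is
   preserved by duality and by matroid union.  For the dual,
   r^*(A) = |A| - r(E) + r(E \ A), so the density inequality of M^* at A is
   that of M at E \ A.  For the union, Edmonds' matroid intersection theorem,
   proved for abstract submodular rank functions by deleting or contracting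
   one element, gives for every A some Y in A with
   r1(Y) + r2(Y) + |A \ Y| <= r(A), r the rank of M1 \/ M2; together with
   r(E) <= r1(E) + r2(E), r(E) <= |E| and the density of M1 and M2 at Y this
   is the density of M1 \/ M2 at A.  That the maximal unions of bases are the
   bases of a matroid comes from the augmentation property of the sets
   covered by a basis of each matroid. *)

From mathcomp Require Import all_boot.
From mathcomp Require Import zify.
Set Implicit Arguments. Unset Strict Implicit. Unset Printing Implicit Defensive.

Section Matroid.
Variable E : finType.
Implicit Types (B : {set {set E}}) (A C I J K P Q S X Y Z : {set E}).

Lemma card_swap X x y : x \in X -> y \notin X -> #|y |: (X :\ x)| = #|X|.
Proof.
by move=> xX yX; rewrite cardsU1 (cardsD1 x X) xX !inE negb_and yX orbT add1n.
Qed.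

Lemma card_setD_sym X Y : #|X| = #|Y| -> #|X :\: Y| = #|Y :\: X|.
Proof. by move=> eXY; rewrite !cardsD eXY setIC. Qed.

Definition indep B I := [exists X in B, I \subset X].

Lemma indepP B I : reflect (exists2 X, X \in B & I \subset X) (indep B I).
Proof.
apply: (iffP existsP) => [[X /andP[XB IX]]|[X XB IX]]; first by exists X.
by exists X; rewrite XB IX.
Qed.

Lemma indepS B I J : J \subset I -> indep B I -> indep B J.
Proof.
by move=> JI /indepP[X XB IX]; apply/indepP; exists X; last exact: subset_trans IX.
Qed.

Lemma basis_indep B C : C \in B -> indep B C.
Proof. by move=> CB; apply/indepP; exists C. Qed.

Section Bases.
Variable B : {set {set E}}.
Hypothesis matB : is_matroid B.

Lemma card_basis X Y : X \in B -> Y \in B -> #|X| = #|Y|.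
Proof.
have [_ exch] := matB.
have [n] := ubnP #|X :\: Y|; elim: n X => // n IHn X ltXYn XB YB.
have [XY0|[x xXY]] := set_0Vmem (X :\: Y).
  have XY : X \subset Y by rewrite -setD_eq0 XY0.
  suff YX : Y \subset X by apply/eqP; rewrite eqn_leq !subset_leq_card.
  apply/subsetP=> y yY; apply/negPn/negP => yX.
  have [|z] := exch Y X YB XB y; first by rewrite inE yX yY.
  by rewrite XY0 inE.
have [y yYX yXB] := exch X Y XB YB x xXY.
move: xXY yYX; rewrite !inE => /andP[xY xX] /andP[yX yY].
rewrite -(card_swap xX yX); apply: IHn yXB YB.
have -> : (y |: (X :\ x)) :\: Y = (X :\: Y) :\ x.
  apply/setP=> w; rewrite !inE; case: (eqVneq w y) => [->|_]; first by rewrite yY !andbF.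
  by case: (w \in Y); rewrite /= ?andbT ?andbF.
by rewrite (cardsD1 x (X :\: Y)) !inE xY xX in ltXYn.
Qed.

Lemma indep_basis K C : indep B K -> C \in B -> #|C| <= #|K| -> K \in B.
Proof.
move=> /indepP[D DB KD] CB leCK.
suff -> : K = D by [].
by apply/eqP; rewrite eqEcard KD (card_basis DB CB).
Qed.

Lemma exchange_meet X Y y : X \in B -> Y \in B -> y \in Y :\: X ->
  exists2 Z, Z \in B & Y :\ y \subset Z /\ #|X :&: Y| < #|X :&: Z|.
Proof.
move=> XB YB yYX; have [z zXY zB] := matB.2 Y X YB XB y yYX.
move: yYX zXY; rewrite !inE => /andP[yX yY] /andP[zY zX].
exists (z |: (Y :\ y)) => //; split; first exact: subsetUr.
apply/proper_card/properP; split.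
  apply/subsetP=> w /setIP[wX wY]; have wy : w != y by apply: contraNneq yX => <-.
  by rewrite !inE wX wY wy orbT.
by exists z; rewrite !inE ?eqxx ?zX // (negbTE zY) andbF.
Qed.

Lemma indep_augment I J : indep B I -> indep B J -> #|I| < #|J| ->
  exists2 x, x \in J :\: I & indep B (x |: I).
Proof.
(* Among the bases containing I, take BI closest to a basis BJ containing J:
   then BI :\: BJ lies in I :\: J, which is smaller than J :\: I. *)
move=> /indepP[C0 C0B IC0] /indepP[BJ BJB JBJ] ltIJ.
pose P C := (C \in B) && (I \subset C).
have PC0 : P C0 by rewrite /P C0B IC0.
have [BI /andP[BIB IBI] BImax] := arg_maxnP (fun C => #|BJ :&: C|) PC0.
have BI_BJ : BI :\: BJ \subset I :\: J.
  apply/subsetP=> y yBIJ; move: (yBIJ); rewrite !inE => /andP[yBJ yBI].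
  rewrite (contraNN (subsetP JBJ y) yBJ) /=; apply/negPn/negP => yI.
  have [Z ZB [BIZ ltZ]] := exchange_meet BJB BIB yBIJ.
  have PZ : P Z.
    rewrite /P ZB; apply: subset_trans BIZ; apply/subsetP=> w wI.
    by rewrite !inE (subsetP IBI w wI) andbT; apply: contraNneq yI => <-.
  by have /= := BImax Z PZ; rewrite leqNgt ltZ.
suff /subsetPn[x xJI] : ~~ (J :\: I \subset BJ :\: BI).
  have xJ : x \in J by move: xJI; rewrite inE => /andP[].
  rewrite inE (subsetP JBJ x xJ) andbT negbK => xBI.
  by exists x => //; apply/indepP; exists BI; rewrite // subUset sub1set xBI IBI.
apply/negP=> /subset_leq_card JI_le; have := subset_leq_card BI_BJ.
rewrite (card_setD_sym (card_basis BIB BJB)) => BI_le.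
have := leq_trans JI_le BI_le; have := subset_leq_card (subsetIl I J).
rewrite !cardsD [J :&: I]setIC; lia.
Qed.

Lemma indep_extend I J : indep B I -> indep B J ->
  exists K, [/\ indep B K, I \subset K, K \subset I :|: J & #|J| <= #|K|].
Proof.
move=> iI iJ; pose P K := [&& indep B K, I \subset K & K \subset I :|: J].
have PI : P I by rewrite /P iI subxx subsetUl.
have [K /and3P[iK IK KIJ] Kmax] := arg_maxnP (fun K => #|K|) PI.
exists K; split=> //; rewrite leqNgt; apply/negP => ltKJ.
have [x] := indep_augment iK iJ ltKJ; rewrite inE => /andP[xK xJ] ixK.
have PxK : P (x |: K).
  by rewrite /P ixK (subset_trans IK (subsetUr _ _)) subUset sub1set !inE xJ orbT.
by have /= := Kmax _ PxK; rewrite cardsU1 xK ltnn.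
Qed.

Lemma mrank_max A X : X \in B -> #|A :&: X| <= mrank B A.
Proof. by move=> XB; rewrite /mrank (leq_bigmax_cond X). Qed.

Lemma indep_leq_mrank A I : indep B I -> I \subset A -> #|I| <= mrank B A.
Proof.
move=> /indepP[X XB IX] IA; apply: leq_trans (mrank_max A XB).
by apply: subset_leq_card; rewrite subsetI IA.
Qed.

Lemma mrank_le_card A : mrank B A <= #|A|.
Proof. by apply/bigmax_leqP => X _; apply/subset_leq_card/subsetIl. Qed.

Lemma mrankS X Y : X \subset Y -> mrank B X <= mrank B Y.
Proof.
move=> XY; apply/bigmax_leqP => C CB; apply: leq_trans (mrank_max Y CB).
by apply/subset_leq_card/setSI.
Qed.

Lemma mrank_attained A : exists2 X, X \in B & mrank B A = #|A :&: X|.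
Proof.
have : 0 < #|B| by rewrite card_gt0 matB.1.
by case/(eq_bigmax_cond (fun X => #|A :&: X|)) => X; exists X.
Qed.

Lemma mrank_witness A : exists I, [/\ indep B I, I \subset A & #|I| = mrank B A].
Proof.
have [X XB ->] := mrank_attained A.
by exists (A :&: X); split; [exact/indepS/basis_indep/XB/subsetIr | exact: subsetIl |].
Qed.

Lemma mrank_indep I : mrank B I = #|I| -> indep B I.
Proof.
have [J [iJ JI cJ]] := mrank_witness I; rewrite -cJ => eIJ.
suff -> : I = J by [].
by apply/esym/eqP; rewrite eqEcard JI eIJ leqnn.
Qed.

Lemma mrankT C : C \in B -> mrank B [set: E] = #|C|.
Proof.
move=> CB; apply/eqP; rewrite eqn_leq -{2}[C]setTI mrank_max // andbT.
by apply/bigmax_leqP => X XB; rewrite setTI (card_basis XB CB).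
Qed.

Lemma basis_swap C I x : C \in B -> I \subset C -> x \notin C -> indep B (x |: I) ->
  exists2 y, y \in C :\: I & x |: (C :\ y) \in B.
Proof.
move=> CB IC xC ixI.
have [K [iK xIK KxC leCK]] := indep_extend ixI (basis_indep CB).
have KB := indep_basis iK CB leCK; have eCK := card_basis CB KB.
have xK : x \in K by apply: (subsetP xIK); rewrite !inE eqxx.
have IK : I \subset K := subset_trans (subsetUr [set x] I) xIK.
have [y yC yK] : exists2 y, y \in C & y \notin K.
  apply/subsetPn/negP => CK.
  have : #|x |: C| <= #|K| by apply: subset_leq_card; rewrite subUset sub1set xK CK.
  by rewrite cardsU1 xC add1n -eCK ltnn.
exists y; first by rewrite inE yC andbT; apply: contra yK; apply: (subsetP IK).
suff <- : K = x |: (C :\ y) by [].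
apply/eqP; rewrite eqEcard; apply/andP; split.
  apply/subsetP=> w wK; have wy : w != y by apply: contraNneq yK => <-.
  move: (subsetP KxC w wK); rewrite !inE wy.
  by case/orP=> [/orP[->|/(subsetP IC)->]|->]; rewrite ?orbT.
by rewrite -eCK (leq_trans (leq_card_setU _ _)) // cards1 (cardsD1 y C) yC.
Qed.

Lemma mrank_submod X Y :
  mrank B (X :|: Y) + mrank B (X :&: Y) <= mrank B X + mrank B Y.
Proof.
have [I [iI IXY cI]] := mrank_witness (X :&: Y).
have [J [iJ JXY cJ]] := mrank_witness (X :|: Y).
have [K [iK IK KIJ leJK]] := indep_extend iI iJ.
have leK Z : #|K :&: Z| <= mrank B Z.
  exact: indep_leq_mrank (indepS (subsetIl K Z) iK) (subsetIr K Z).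
have hI : #|I| <= #|(K :&: X) :&: (K :&: Y)|.
  by apply: subset_leq_card; rewrite setIACA setIid subsetI IK.
have eK : (K :&: X) :|: (K :&: Y) = K.
  rewrite -setIUr; apply/setIidPl; apply: subset_trans KIJ _.
  by rewrite subUset JXY (subset_trans IXY) // subIset // subsetUl.
have := leK X; have := leK Y; have := cardsUI (K :&: X) (K :&: Y); rewrite eK; lia.
Qed.

End Bases.

Section Duality.
Variable B : {set {set E}}.
Hypothesis matB : is_matroid B.

Lemma mdual_matroid : is_matroid (mdual B).
Proof.
split.
  by have [C CB] := set0Pn _ matB.1; apply/set0Pn; exists (~: C); apply: imset_f.
move=> _ _ /imsetP[C1 C1B ->] /imsetP[C2 C2B ->] x; rewrite !inE negbK => /andP[xC2 xC1].
have [|y] := basis_swap matB C1B (subsetIl C1 C2) xC1.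
  by apply/indepP; exists C2 => //; rewrite subUset sub1set xC2 subsetIr.
rewrite !inE => /andP[yC1C2 yC1] swapB.
have yC2 : y \notin C2 by move: yC1C2; rewrite yC1.
have yx : y != x by apply: contraNneq xC1 => <-.
exists y; first by rewrite !inE negbK yC1 yC2.
suff -> : y |: (~: C1 :\ x) = ~: (x |: (C1 :\ y)) by apply: imset_f.
apply/setP=> w; rewrite !inE; case: (eqVneq w y) => [->|_]; first by rewrite (negbTE yx).
by case: (w == x); case: (w \in C1).
Qed.

Lemma mrank_dual A C : C \in B ->
  mrank (mdual B) A + #|C| = #|A| + mrank B (~: A).
Proof.
move=> CB.
have swap X : X \in B -> #|A :&: ~: X| + #|C| = #|A| + #|~: A :&: X|.
  move=> XB; rewrite -(card_basis matB XB CB) -setDE setIC -setDE.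
  have := cardsID X A; have := cardsID A X; rewrite setIC; lia.
have [X XB eX] := mrank_attained matB (~: A).
have [_ /imsetP[Y YB ->] eY] := mrank_attained mdual_matroid A.
have := @mrank_max (mdual B) A _ (imset_f _ XB); have := mrank_max (~: A) YB.
have := swap X XB; have := swap Y YB; lia.
Qed.

Lemma mdual_uniformly_dense : uniformly_dense B -> uniformly_dense (mdual B).
Proof.
move=> denseB A A0; have [C CB] := set0Pn _ matB.1.
have eT := mrankT mdual_matroid (imset_f _ CB).
have eA := mrank_dual A CB; have kT := mrankT matB CB.
have dense_compl : #|~: A| * #|C| <= #|E| * mrank B (~: A).
  have [-> | nA] := eqVneq (~: A) set0; first by rewrite cards0.
  by rewrite -kT; apply: denseB.
(* With k = |C| = r(E), the inequality |A| (|E| - k) <= |E| (|A| + r(~: A) - k)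
   is |~: A| k <= |E| r(~: A). *)
have := cardsC A; have := cardsC C; move: eT eA dense_compl; nia.
Qed.

End Duality.

Definition rank_fun (r : {set E} -> nat) := [/\ forall X, r X <= #|X|,
  forall X Y, X \subset Y -> r X <= r Y &
  forall X Y, r (X :|: Y) + r (X :&: Y) <= r X + r Y].

Lemma mrank_rank_fun B : is_matroid B -> rank_fun (mrank B).
Proof.
by move=> matB; split; [exact: mrank_le_card | exact: mrankS | exact: mrank_submod].
Qed.

Section RankFunction.
Variable r : {set E} -> nat.
Hypothesis rf : rank_fun r.

Lemma rank_le_card X : r X <= #|X|.
Proof. by case: rf. Qed.

Lemma rankS X Y : X \subset Y -> r X <= r Y.
Proof. by case: rf => _ + _; apply. Qed.

Lemma rank_submod X Y : r (X :|: Y) + r (X :&: Y) <= r X + r Y.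
Proof. by case: rf. Qed.

Lemma rank_subadd X Y : r (X :|: Y) <= r X + r Y.
Proof. exact: leq_trans (leq_addr _ _) (rank_submod X Y). Qed.

Lemma rank_setU1_gt0 e X : r [set e] = 1 -> 0 < r (e |: X).
Proof. by move=> re; rewrite -re rankS // subsetUl. Qed.

Lemma rank0 : r set0 = 0.
Proof. by apply/eqP; rewrite -leqn0 -(cards0 E) rank_le_card. Qed.

Lemma rank_le_setD A X : r A <= #|X| + r (A :\: X).
Proof.
rewrite -{1}(setID A X); apply: leq_trans (rank_subadd _ _) _.
by rewrite leq_add2r (leq_trans (rank_le_card _)) // subset_leq_card // subsetIr.
Qed.

Lemma rank_le_setD1 X e : r X <= r (X :\ e) + r [set e].
Proof.
rewrite addnC; apply: leq_trans (rank_subadd _ _); apply: rankS.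
by apply/subsetP=> w wX; rewrite !inE wX andbT; case: eqP.
Qed.

(* On subsets of A, the rank function of the dual of the restriction to A. *)
Definition dual_rank A X := #|X| + r (A :\: X) - r A.

Lemma rank_fun_dual_rank A : rank_fun (dual_rank A).
Proof.
rewrite /dual_rank; split.
- by move=> X; have := rankS (subsetDl A X); lia.
- move=> X Y XY; apply: leq_sub2r.
  have AX : A :\: X \subset (A :\: Y) :|: (Y :\: X).
    by apply/subsetP=> w; rewrite !inE; case: (w \in Y); case: (w \in X); case: (w \in A).
  have := leq_trans (rankS AX) (rank_subadd _ _).
  have := rank_le_card (Y :\: X); have := cardsID X Y; rewrite (setIidPr XY); lia.
- move=> X Y; have := rank_submod (A :\: X) (A :\: Y).
  rewrite -setDIr -setDUr; have := cardsUI X Y.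
  have := rank_le_setD A X; have := rank_le_setD A Y.
  have := rank_le_setD A (X :|: Y); have := rank_le_setD A (X :&: Y); lia.
Qed.

(* The rank function of the contraction by e, when e is not a loop. *)
Definition contract e X := r (e |: X) - 1.

Lemma rank_fun_contract e : r [set e] = 1 -> rank_fun (contract e).
Proof.
move=> re; have ge1 X := rank_setU1_gt0 X re.
rewrite /contract; split.
- move=> X; have := rank_le_card (e |: X); have := ge1 X.
  by rewrite cardsU1; case: (e \notin X) => /=; lia.
- by move=> X Y XY; rewrite leq_sub2r // rankS // setUS.
- move=> X Y; have := rank_submod (e |: X) (e |: Y); rewrite -setUUr -setUIr.
  have := ge1 X; have := ge1 Y; have := ge1 (X :|: Y); have := ge1 (X :&: Y); lia.
Qed.

End RankFunction.

(* The max >= min half of Edmonds' theorem: a common independent set I of S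
   at least as large as the value of the cut Y. *)
Definition intersection_cert (r1 r2 : {set E} -> nat) S I Y :=
  [/\ I \subset S, Y \subset S, r1 I = #|I|, r2 I = #|I|
     & r1 Y + r2 (S :\: Y) <= #|I|].

Section IntersectionStep.
Variables (r1 r2 : {set E} -> nat) (S : {set E}) (e : E).
Hypotheses (r1f : rank_fun r1) (r2f : rank_fun r2) (eS : e \in S).
Variables (I Y : {set E}).
Hypothesis cert : intersection_cert r1 r2 (S :\ e) I Y.

Let IS : I \subset S.
Proof. by case: cert => + _ _ _ _; move/subset_trans; apply; apply: subsetDl. Qed.

Let YS : Y \subset S.
Proof. by case: cert => _ + _ _ _; move/subset_trans; apply; apply: subsetDl. Qed.

Let eY : e \notin Y.
Proof. by case: cert => _ /subsetP YSe _ _ _; apply/negP => /YSe; rewrite !inE eqxx. Qed.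

Let cutS : r2 (S :\: Y) <= r2 ((S :\ e) :\: Y) + r2 [set e].
Proof. by rewrite setDDl setUC -setDDl rank_le_setD1. Qed.

Lemma cert_r1_loop : r1 [set e] = 0 -> intersection_cert r1 r2 S I (e |: Y).
Proof.
move=> r1e; case: cert => _ _ r1I r2I bound; split => //.
  by rewrite subUset sub1set eS YS.
rewrite -setDDl; have := rank_subadd r1f [set e] Y; rewrite r1e; lia.
Qed.

Lemma cert_r2_loop : r2 [set e] = 0 -> intersection_cert r1 r2 S I Y.
Proof.
move=> r2e; case: cert => _ _ r1I r2I bound; split=> //.
by move: cutS; rewrite r2e; lia.
Qed.

Variables (I' Y' : {set E}).
Hypotheses (r1e : r1 [set e] = 1) (r2e : r2 [set e] = 1).
Hypothesis cert' : intersection_cert (contract r1 e) (contract r2 e) (S :\ e) I' Y'.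

Lemma cert_lift : #|I| <= #|I'| -> intersection_cert r1 r2 S (e |: I') Y.
Proof.
move=> leII'; case: cert => _ _ _ _ bound.
case: cert' => I'S _ + + _; rewrite /contract => r1I' r2I'.
have eI' : e \notin I' by apply/negP => /(subsetP I'S); rewrite !inE eqxx.
have := rank_setU1_gt0 r1f I' r1e; have := rank_setU1_gt0 r2f I' r2e.
rewrite /intersection_cert cardsU1 eI' subUset sub1set eS (subset_trans I'S) ?subsetDl //.
by split=> //; lia.
Qed.

Lemma cert_uncross : #|I'| < #|I| -> exists Y'', intersection_cert r1 r2 S I Y''.
Proof.
move=> ltI'I; case: cert => _ _ r1I r2I bound; case: cert' => _ Y'S _ _.
rewrite /contract => bound'.
set Z := e |: Y' in bound' *; set V := e |: ((S :\ e) :\: Y') in bound' *.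
set U := (S :\ e) :\: Y in bound *.
have geZ : 0 < r1 Z := rank_setU1_gt0 r1f Y' r1e.
have geV : 0 < r2 V := rank_setU1_gt0 r2f _ r2e.
have ZS : Z \subset S by rewrite subUset sub1set eS (subset_trans Y'S) ?subsetDl.
have eUV : U :|: V = S :\: (Y :&: Z).
  apply/setP=> w; rewrite /U /V /Z !inE; case: (eqVneq w e) => [->|_] /=.
    by rewrite eS (negbTE eY).
  by case: (w \in S); case: (w \in Y); case: (w \in Y').
have eUIV : U :&: V = S :\: (Y :|: Z).
  apply/setP=> w; rewrite /U /V /Z !inE; case: (eqVneq w e) => [->|_] /=.
    by rewrite orbT andbF.
  by case: (w \in S); case: (w \in Y); case: (w \in Y').
(* Submodularity bounds the values of the cuts at Y :&: Z and Y :|: Z by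
   2 #|I| + 1 in total, so one of them is at most #|I|. *)
have := rank_submod r1f Y Z; have := rank_submod r2f U V; rewrite eUV eUIV.
have [le | lt] := leqP (r1 (Y :&: Z) + r2 (S :\: (Y :&: Z))) #|I|.
  by exists (Y :&: Z); split=> //; rewrite subIset ?YS.
by exists (Y :|: Z); split=> //; [rewrite subUset YS ZS | lia].
Qed.

End IntersectionStep.

Theorem rank_intersection r1 r2 S : rank_fun r1 -> rank_fun r2 ->
  exists I Y, intersection_cert r1 r2 S I Y.
Proof.
have [n] := ubnP #|S|; elim: n S r1 r2 => // n IHn S r1 r2 ltSn r1f r2f.
have [-> | [e eS]] := set_0Vmem S.
  by exists set0, set0; split; rewrite ?sub0set ?setD0 ?(rank0 r1f) ?(rank0 r2f) ?cards0.
have ltS'n : #|S :\ e| < n by rewrite (cardsD1 e S) eS in ltSn.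
have [I [Y cert]] := IHn _ r1 r2 ltS'n r1f r2f.
have [r1e | r1e] := posnP (r1 [set e]).
  by exists I, (e |: Y); apply: cert_r1_loop.
have [r2e | r2e] := posnP (r2 [set e]).
  by exists I, Y; apply: (cert_r2_loop (e := e)).
have {}r1e : r1 [set e] = 1 by have := rank_le_card r1f [set e]; rewrite cards1; lia.
have {}r2e : r2 [set e] = 1 by have := rank_le_card r2f [set e]; rewrite cards1; lia.
have [I' [Y' cert']] :=
  IHn _ _ _ ltS'n (rank_fun_contract r1f r1e) (rank_fun_contract r2f r2e).
have [le | lt] := leqP #|I| #|I'|.
  by exists (e |: I'), Y; exact: (cert_lift r1f r2f eS cert r1e r2e cert' le).
by have [Y''] := cert_uncross r1f r2f eS cert r1e r2e cert' lt; exists I, Y''.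
Qed.

Definition union_indep B1 B2 P :=
  exists C1 C2, [/\ C1 \in B1, C2 \in B2 & P \subset C1 :|: C2].

Definition indep_split B1 B2 P P1 P2 :=
  [&& P1 :|: P2 == P, [disjoint P1 & P2], indep B1 P1 & indep B2 P2].

(* How far a partition (P1, P2) of one partitionable set is from a partition
   (Q1, Q2) of another; a closest partition is the one that can be augmented. *)
Definition split_cost Q1 Q2 P1 P2 := #|P1 :\: Q1| + #|P2 :\: Q2|.

Lemma indep_split_sym B1 B2 P P1 P2 :
  indep_split B1 B2 P P1 P2 = indep_split B2 B1 P P2 P1.
Proof. by rewrite /indep_split setUC disjoint_sym [indep B1 P1 && _]andbC. Qed.

Lemma card_indep_split B1 B2 P P1 P2 :
  indep_split B1 B2 P P1 P2 -> #|P| = #|P1| + #|P2|.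
Proof. by case/and4P=> /eqP <- dP _ _; apply/eqP; rewrite (leq_card_setU P1 P2).2. Qed.

Lemma union_indepS B1 B2 P Q : P \subset Q -> union_indep B1 B2 Q -> union_indep B1 B2 P.
Proof.
by move=> PQ [C1 [C2 [C1B C2B QC]]]; exists C1, C2; split=> //; apply: subset_trans QC.
Qed.

Lemma union_indepU B1 B2 P1 P2 :
  indep B1 P1 -> indep B2 P2 -> union_indep B1 B2 (P1 :|: P2).
Proof.
move=> /indepP[C1 C1B P1C1] /indepP[C2 C2B P2C2].
by exists C1, C2; split=> //; apply: setUSS.
Qed.

Lemma union_indep_split B1 B2 P :
  union_indep B1 B2 P -> exists P1 P2, indep_split B1 B2 P P1 P2.
Proof.
case=> C1 [C2 [C1B C2B PC]]; exists (P :&: C1), (P :\: C1).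
rewrite /indep_split setID eqxx /=; apply/and3P; split.
- rewrite -setI_eq0; apply/eqP/setP=> w; rewrite !inE.
  by case: (w \in C1); rewrite ?andbF.
- by apply/indepP; exists C1; last exact: subsetIr.
apply/indepP; exists C2 => //; apply/subsetP=> w; rewrite inE => /andP[wC1 /(subsetP PC)].
by rewrite inE (negbTE wC1).
Qed.

Lemma split_augment B1 B2 P P1 P2 Q1 Q2 : is_matroid B1 ->
  indep_split B1 B2 P P1 P2 -> indep B1 Q1 -> [disjoint Q1 & Q2] -> #|P1| < #|Q1| ->
  (forall R1 R2, indep_split B1 B2 P R1 R2 ->
     split_cost Q1 Q2 P1 P2 <= split_cost Q1 Q2 R1 R2) ->
  exists2 x, x \in Q1 :\: P & indep B1 (x |: P1).
Proof.
move=> matB1 /and4P[/eqP eP dP iP1 iP2] iQ1 dQ ltPQ Pmin.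
have [x] := indep_augment matB1 iP1 iQ1 ltPQ; rewrite inE => /andP[xP1 xQ1] ixP1.
have [xP2 | xP2] := boolP (x \in P2); last first.
  by exists x => //; rewrite -eP !inE negb_or xP1 xP2 xQ1.
have xQ2 : x \notin Q2 by rewrite (disjointFr dQ xQ1).
have split_moved : indep_split B1 B2 P (x |: P1) (P2 :\ x).
  rewrite /indep_split ixP1 (indepS (subsetDl _ _) iP2) !andbT; apply/andP; split.
    rewrite -eP; apply/eqP/setP=> w; rewrite !inE.
    by case: eqVneq => [->|]; rewrite ?xP2 ?orbT.
  rewrite -setI_eq0; apply/eqP/setP=> w; rewrite !inE; case: eqVneq => //= _.
  by case wP1: (w \in P1); rewrite //= (disjointFr dP wP1).
have := Pmin _ _ split_moved; rewrite /split_cost.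
have : #|(x |: P1) :\: Q1| <= #|P1 :\: Q1|.
  by apply/subset_leq_card/subsetP=> w; rewrite !inE; case: eqVneq => [->|]; rewrite ?xQ1.
have : #|(P2 :\ x) :\: Q2| < #|P2 :\: Q2|.
  apply/proper_card/properP; split; last by exists x; rewrite !inE ?eqxx ?xQ2 ?xP2.
  by apply/subsetP=> w; rewrite !inE => /andP[-> /andP[_ ->]].
lia.
Qed.

Section Union.
Variables B1 B2 : {set {set E}}.
Hypotheses (matB1 : is_matroid B1) (matB2 : is_matroid B2).

Lemma union_indep_augment P Q : union_indep B1 B2 P -> union_indep B1 B2 Q ->
  #|P| < #|Q| -> exists2 z, z \in Q :\: P & union_indep B1 B2 (z |: P).
Proof.
move=> /union_indep_split[P1 [P2 splitP]] /union_indep_split[Q1 [Q2 splitQ]] ltPQ.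
pose splits (R : {set E} * {set E}) := indep_split B1 B2 P R.1 R.2.
have splitsP : splits (P1, P2) by [].
have [[R1 R2] splitR Rmin] := arg_minnP (fun R => split_cost Q1 Q2 R.1 R.2) splitsP.
rewrite /splits /= in splitR.
have Rmin' R1' R2' : indep_split B1 B2 P R1' R2' ->
    split_cost Q1 Q2 R1 R2 <= split_cost Q1 Q2 R1' R2'.
  exact: (Rmin (R1', R2')).
have /and4P[/eqP eQ dQ iQ1 iQ2] := splitQ; have /and4P[/eqP eP _ iR1 iR2] := splitR.
have QQ1 : Q1 \subset Q by rewrite -eQ subsetUl.
have QQ2 : Q2 \subset Q by rewrite -eQ subsetUr.
have [lt1 | le1] := ltnP #|R1| #|Q1|.
  have [x xQP ixR1] := split_augment matB1 splitR iQ1 dQ lt1 Rmin'.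
  exists x; first by move: xQP; rewrite !inE => /andP[-> /(subsetP QQ1)].
  by rewrite -eP setUA; apply: union_indepU.
have lt2 : #|R2| < #|Q2|.
  by move: ltPQ; rewrite (card_indep_split splitR) (card_indep_split splitQ); lia.
rewrite indep_split_sym in splitR.
have Rmin'' R2' R1' : indep_split B2 B1 P R2' R1' ->
    split_cost Q2 Q1 R2 R1 <= split_cost Q2 Q1 R2' R1'.
  by rewrite -indep_split_sym /split_cost ![#|_ :\: Q2| + _]addnC; apply: Rmin'.
have dQ' : [disjoint Q2 & Q1] by rewrite disjoint_sym.
have [x xQP ixR2] := split_augment matB2 splitR iQ2 dQ' lt2 Rmin''.
exists x; first by move: xQP; rewrite !inE => /andP[-> /(subsetP QQ2)].
by rewrite -eP setUCA; apply: union_indepU.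
Qed.

Lemma munion_cover X : X \in munion B1 B2 ->
  exists C1 C2, [/\ C1 \in B1, C2 \in B2 & X = C1 :|: C2].
Proof. by rewrite inE => /andP[/imset2P[C1 C2 C1B C2B ->] _]; exists C1, C2. Qed.

Lemma munion_max X C1 C2 : X \in munion B1 B2 -> C1 \in B1 -> C2 \in B2 ->
  X \subset C1 :|: C2 -> C1 :|: C2 = X.
Proof.
rewrite inE => /andP[_ /forall_inP Xmax] C1B C2B XC.
by apply/eqP; move: (Xmax _ (imset2_f _ C1B C2B)); rewrite XC.
Qed.

Lemma munion_exists C1 C2 : C1 \in B1 -> C2 \in B2 ->
  exists2 W, W \in munion B1 B2 & C1 :|: C2 \subset W.
Proof.
move=> C1B C2B; set U := [set X :|: Y | X in B1, Y in B2].
pose P W := (W \in U) && (C1 :|: C2 \subset W).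
have PC : P (C1 :|: C2) by rewrite /P subxx andbT imset2_f.
have [W /andP[WU CW] Wmax] := arg_maxnP (fun W : {set E} => #|W|) PC.
exists W => //; rewrite inE WU; apply/forall_inP=> Y YU; apply/implyP=> WY.
have /= leYW := Wmax Y; rewrite /P YU (subset_trans CW WY) in leYW.
by rewrite eq_sym eqEcard WY leYW.
Qed.

Lemma munion_union_indep X : X \in munion B1 B2 -> union_indep B1 B2 X.
Proof. by case/munion_cover=> C1 [C2 [C1B C2B ->]]; exists C1, C2. Qed.

Lemma union_indep_leq_mrank A P : union_indep B1 B2 P -> P \subset A ->
  #|P| <= mrank (munion B1 B2) A.
Proof.
move=> [C1 [C2 [C1B C2B PC]]] PA; have [W WU CW] := munion_exists C1B C2B.
apply: leq_trans (mrank_max A WU); apply: subset_leq_card.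
by rewrite subsetI PA (subset_trans PC CW).
Qed.

Lemma card_munion X Y : X \in munion B1 B2 -> Y \in munion B1 B2 -> #|X| = #|Y|.
Proof.
suff le_card X' Y' : X' \in munion B1 B2 -> Y' \in munion B1 B2 -> #|X'| <= #|Y'|.
  by move=> XU YU; apply/eqP; rewrite eqn_leq !le_card.
move=> XU YU; rewrite leqNgt; apply/negP => ltYX.
have [z] := union_indep_augment (munion_union_indep YU) (munion_union_indep XU) ltYX.
rewrite inE => /andP[zY _] [C1 [C2 [C1B C2B zYC]]].
have eC := munion_max YU C1B C2B (subset_trans (subsetUr _ _) zYC).
by move: (subsetP zYC z); rewrite eC !inE eqxx (negbTE zY) => /(_ isT).
Qed.

Lemma munion_matroid : is_matroid (munion B1 B2).
Proof.
split.
  have [C1 C1B] := set0Pn _ matB1.1; have [C2 C2B] := set0Pn _ matB2.1.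
  by have [W WU _] := munion_exists C1B C2B; apply/set0Pn; exists W.
move=> X Y XU YU x; rewrite inE => /andP[xY xX].
have uX : union_indep B1 B2 (X :\ x) := union_indepS (subsetDl _ _) (munion_union_indep XU).
have cX : #|X| = (#|X :\ x|).+1 by rewrite (cardsD1 x X) xX.
have ltXY : #|X :\ x| < #|Y| by rewrite -(card_munion XU YU) cX.
have [z] := union_indep_augment uX (munion_union_indep YU) ltXY.
rewrite !inE => /andP[zXx zY] [C1 [C2 [C1B C2B zXC]]].
have zx : z != x by apply: contraNneq xY => <-.
have zX : z \notin X by move: zXx; rewrite zx.
exists z; first by rewrite inE zX zY.
have [W WU CW] := munion_exists C1B C2B.
suff -> : z |: (X :\ x) = W by [].
apply/eqP; rewrite eqEcard (subset_trans zXC CW) /= -(card_munion XU WU).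
by rewrite (card_swap xX zX).
Qed.

Lemma mrank_munion_le A : mrank (munion B1 B2) A <= mrank B1 A + mrank B2 A.
Proof.
apply/bigmax_leqP=> _ /munion_cover[C1 [C2 [C1B C2B ->]]].
rewrite setIUr; apply: leq_trans (leq_card_setU _ _) _.
by rewrite leq_add ?mrank_max.
Qed.

Lemma mrank_munion_ge A : exists2 Y : {set E}, Y \subset A &
  mrank B1 Y + mrank B2 Y + #|A :\: Y| <= mrank (munion B1 B2) A.
Proof.
have rf1 := mrank_rank_fun matB1; have rf2 := mrank_rank_fun matB2.
have [I [Y [IA YA r1I r2I bound]]] := rank_intersection A rf1 (rank_fun_dual_rank rf2 A).
exists Y => //; move: r2I bound; rewrite /dual_rank.
have -> : A :\: (A :\: Y) = Y by rewrite setDDr setDv set0U; apply/setIidPr.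
have [J [iJ JAI cJ]] := mrank_witness matB2 (A :\: I).
have IJ : #|I :|: J| = #|I| + #|J|.
  apply/eqP; rewrite (leq_card_setU I J).2 disjoint_sym disjoints_subset.
  by apply: subset_trans JAI _; apply/subsetP=> w; rewrite !inE => /andP[].
have IJA : I :|: J \subset A by rewrite subUset IA (subset_trans JAI (subsetDl _ _)).
have := union_indep_leq_mrank (union_indepU (mrank_indep matB1 r1I) iJ) IJA.
have := rank_le_setD rf2 A I; have := rankS rf2 (subsetDl A I).
have := rank_le_setD rf2 A (A :\: Y); rewrite setDDr setDv set0U (setIidPr YA).
lia.
Qed.

Lemma munion_uniformly_dense :
  uniformly_dense B1 -> uniformly_dense B2 -> uniformly_dense (munion B1 B2).
Proof.
move=> dense1 dense2 A A0; have [Y YA rankY] := mrank_munion_ge A.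
have dense_on (B : {set {set E}}) : uniformly_dense B ->
    #|Y| * mrank B [set: E] <= #|E| * mrank B Y.
  by move=> denseB; have [-> | Y0] := eqVneq Y set0; [rewrite cards0 | apply: denseB].
(* |A| r(E) <= |Y| (r1(E) + r2(E)) + |A \ Y| |E|
            <= |E| (r1(Y) + r2(Y) + |A \ Y|) <= |E| r(A). *)
have leR : mrank (munion B1 B2) [set: E] <= #|E| by rewrite -cardsT mrank_le_card.
have := mrank_munion_le [set: E]; have := dense_on _ dense1; have := dense_on _ dense2.
rewrite -(cardsID Y A) (setIidPr YA); nia.
Qed.

End Union.

End Matroid.

Theorem corollary2p8 (E : finType) (B1 B2 : {set {set E}}) :
  is_matroid B1 -> loopless B1 -> uniformly_dense B1 ->
  is_matroid B2 -> loopless B2 -> uniformly_dense B2 ->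
  is_matroid (mmeet B1 B2) /\ uniformly_dense (mmeet B1 B2).
Proof.
move=> mat1 _ dense1 mat2 _ dense2.
have [matD1 matD2] := (mdual_matroid mat1, mdual_matroid mat2).
have matU := munion_matroid matD1 matD2.
split; first exact: mdual_matroid.
apply: mdual_uniformly_dense => //.
exact: munion_uniformly_dense
  (mdual_uniformly_dense mat1 dense1) (mdual_uniformly_dense mat2 dense2).
Qed.
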